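(* Let $(S,\sigma)$ be an enriched permutation of $\mathbb{Z}_{>0}$ (that is, $S\subseteq\mathbb{Z}_{>0}$ is a finite subset and $\sigma$ is a permutation of $S$). Then $R(I_S)\leq R(\sigma)$, with equality if and only if $\sigma=I_S$, where $I_S$ denotes the identity permutation of $S$.
   Context: Let $p$ be a prime and fix $y\in\mathbb{Z}_p$ which is not a positive integer, with $p$-adic expansion $y=\sum_{n\geq 0} y_n p^n$, $0\leq y_n<p$. For an integer $n\geq 1$ define $d(n)=p^w$, where $w$ is the unique integer with $\sum_{j=0}^{w-1} y_j < n \leq \sum_{j=0}^{w} y_j$; for $n<1$ set $d(n)=0$. For $m\in\mathbb{Z}$ set $y(m)=\sum_{n=1}^{m} d(n)$ (equal to $0$ when $m<1$). For $k_1,k_2\in\mathbb{Z}_{>0}$ define $R(k_1,k_2)=y(pk_1-k_2)$, and for an enriched permutation $(S,\sigma)$ of $\mathbb{Z}_{>0}$ define $R(\sigma)=\sum_{k\in S}R(k,\sigma(k))$. *)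

From Stdlib Require Import ClassicalEpsilon.
From mathcomp Require Import all_boot all_order all_algebra.
Set Implicit Arguments. Unset Strict Implicit. Unset Printing Implicit Defensive.
Import Order.TTheory GRing.Theory Num.Theory.

(* The p-adic integer y is represented by its digit sequence yd : nat -> nat,
   y = \sum_n yd n * p^n, with 0 <= yd n < p. *)

Definition psum (yd : nat -> nat) (w : nat) : nat := \sum_(0 <= j < w) yd j.

Definition dexp (yd : nat -> nat) (n : nat) : nat :=
  epsilon (inhabits 0%N) (fun w => psum yd w < n <= psum yd w.+1)%N.

Definition dfun (p : nat) (yd : nat -> nat) (n : nat) : nat :=
  if (0 < n)%N then (p ^ dexp yd n)%N else 0%N.

Definition ycum (p : nat) (yd : nat -> nat) (m : int) : nat :=
  match m with
  | Posz k => (\sum_(1 <= n < k.+1) dfun p yd n)%N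
  | Negz _ => 0%N
  end.

Definition Rk (p : nat) (yd : nat -> nat) (k1 k2 : nat) : nat :=
  ycum p yd ((Posz (p * k1)%N - Posz k2)%R).

Definition enriched_perm (S : seq nat) (sigma : nat -> nat) : Prop :=
  [/\ uniq S, all (fun k => 0 < k)%N S,
      {in S, forall k, sigma k \in S} & {in S &, injective sigma}].

Definition Rperm (p : nat) (yd : nat -> nat) (S : seq nat) (sigma : nat -> nat)
  : nat := (\sum_(k <- S) Rk p yd k (sigma k))%N.

(* The cost R(k1, k2) = y(p k1 - k2) satisfies the strict exchange inequality
   R(j, i) + R(m, m) < R(j, m) + R(m, i) for i, j < m: the two sides compare
   the increments of y over windows of length m - i starting at p j - m and at
   p m - m, which are at least p apart.  The increments d(n) of y are
   nondecreasing, and d(n) < d(n') whenever n' >= n + p, because every digit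
   of y is smaller than p, so the last step of the right window is strictly
   larger.
   Now let m be the largest element of S.  If sigma fixes m, induct on S minus
   m.  Otherwise short-circuit m out of its cycle, sending sigma^-1(m) to
   sigma(m): by the exchange inequality this strictly lowers R(sigma), and by
   induction the identity does no better than the shortened permutation. *)

From mathcomp Require Import all_boot all_algebra.
From mathcomp Require Import zify.
From Stdlib Require Import Classical_Prop ClassicalEpsilon.
Set Implicit Arguments. Unset Strict Implicit. Unset Printing Implicit Defensive.
Import GRing.Theory.

Section SeqPerm.
Variable T : eqType.

Definition seq_perm (S : seq T) (sigma : T -> T) : Prop :=
  [/\ uniq S, {in S, forall k, sigma k \in S} & {in S &, injective sigma}].

Lemma seq_perm_surj S sigma :
  seq_perm S sigma -> {in S, forall m, exists2 j, j \in S & sigma j = m}.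
Proof.
case=> uS sigmaS sigma_inj m mS.
have sub : {subset map sigma S <= S} by move=> _ /mapP[k kS ->]; apply: sigmaS.
have [_ /(_ m)] := uniq_min_size (etrans (map_inj_in_uniq sigma_inj) uS) sub
  (eq_leq (esym (size_map _ _))).
by rewrite mS => /mapP[j jS ->]; exists j.
Qed.

(* [eta sigma with j |-> sigma m] short-circuits m out of its cycle
   j -> m -> sigma m. *)
Lemma seq_perm_rem S sigma m j :
  seq_perm S sigma -> m \in S -> j \in S -> sigma j = m ->
  seq_perm (rem m S) [eta sigma with j |-> sigma m].
Proof.
case=> uS sigmaS sigma_inj mS jS sjm.
have memS' k : (k \in rem m S) = (k != m) && (k \in S).
  by rewrite (mem_rem_uniq _ uS) inE.
have sigma_eq_m k : k \in S -> (sigma k == m) = (k == j).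
  by move=> kS; apply/eqP/eqP => [|->//]; rewrite -sjm => /sigma_inj->.
split; first exact: rem_uniq.
- move=> k; rewrite memS' /= => /andP[km kS].
  case: eqP => [kj|/eqP kj]; last by rewrite memS' sigma_eq_m // kj sigmaS.
  by rewrite memS' sigma_eq_m // sigmaS // andbT -kj eq_sym.
- move=> a b; rewrite !memS' /= => /andP[am aS] /andP[bm bS].
  case: (eqVneq a j) => [->|aj]; case: (eqVneq b j) => [->|bj] //.
  + by move/(sigma_inj _ _ mS bS) => mb; rewrite mb eqxx in bm.
  + by move/(sigma_inj _ _ aS mS) => am'; rewrite am' eqxx in am.
  + exact: sigma_inj.
Qed.

Lemma seq_perm_rem_fixed S sigma m :
  seq_perm S sigma -> m \in S -> sigma m = m -> seq_perm (rem m S) sigma.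
Proof.
case=> uS sigmaS sigma_inj mS sigma_m.
have memS' k : (k \in rem m S) = (k != m) && (k \in S).
  by rewrite (mem_rem_uniq _ uS) inE.
split; first exact: rem_uniq.
- move=> k; rewrite !memS' => /andP[km kS]; rewrite sigmaS // andbT.
  by apply: contra_neq km => skm; apply: sigma_inj => //; rewrite skm sigma_m.
- by move=> a b; rewrite !memS' => /andP[_ aS] /andP[_ bS]; apply: sigma_inj.
Qed.

Lemma sum_seq_perm_rem (F : T -> T -> nat) S sigma m j :
  seq_perm S sigma -> m \in S -> j \in S -> sigma j = m -> j != m ->
  \sum_(k <- S) F k (sigma k) + F j (sigma m) =
    F m (sigma m) + F j m +
    \sum_(k <- rem m S) F k ([eta sigma with j |-> sigma m] k).
Proof.
case=> uS _ _ mS jS sjm jm.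
have jS' : j \in rem m S by rewrite mem_rem_uniq // inE /= jm.
rewrite (perm_big _ (perm_to_rem mS)) big_cons.
rewrite !(bigD1_seq j jS' (rem_uniq _ uS)) /= eqxx sjm.
rewrite [in RHS](eq_bigr (fun k => F k (sigma k))) => [|k /negPf->//].
by rewrite !addnA addnAC.
Qed.

End SeqPerm.

Section Monge.
Variable F : nat -> nat -> nat.
Hypothesis F_exchange :
  forall j i m, j < m -> i < m -> F j i + F m m < F j m + F m i.

Lemma leqif_sum_seq_perm S sigma : seq_perm S sigma ->
  \sum_(k <- S) F k k <= \sum_(k <- S) F k (sigma k)
    ?= iff all (fun k => sigma k == k) S.
Proof.
have [n ltSn] : exists n, {in S, forall k, k < n}.
  by exists (\max_(k <- S) k).+1 => k kS; rewrite ltnS (leq_bigmax_seq k).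
elim: n S sigma ltSn => [|n IHn] S sigma ltSn hsigma.
  by case: S ltSn {hsigma} => [|k S /(_ k (mem_head k S))]; rewrite ?big_nil.
have [nS|nS] := boolP (n \in S); last first.
  apply: IHn hsigma => k kS; rewrite ltn_neqAle -ltnS ltSn // andbT.
  by apply: contraNneq nS => <-.
have [uS sigmaS _] := hsigma.
have memS' k : (k \in rem n S) = (k != n) && (k \in S).
  by rewrite (mem_rem_uniq _ uS) inE.
have ltS'n k : k \in rem n S -> k < n.
  by rewrite memS' ltn_neqAle -ltnS => /andP[-> /ltSn->].
have sum_rem G : \sum_(k <- S) G k = G n + \sum_(k <- rem n S) G k.
  by rewrite (perm_big _ (perm_to_rem nS)) big_cons.
rewrite !sum_rem (perm_all _ (perm_to_rem nS)) /=.
have [sigma_n|sigma_n] := eqVneq (sigma n) n.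
  rewrite sigma_n; apply: leqif_add; first exact/leqif_refl.
  exact: IHn ltS'n (seq_perm_rem_fixed hsigma nS sigma_n).
have [j jS sjn] := seq_perm_surj hsigma nS.
have jn : j != n by apply: contra_neq sigma_n => e; rewrite -{1}e sjn.
have IH := IHn _ _ ltS'n (seq_perm_rem hsigma nS jS sjn).
have sum_eq := sum_seq_perm_rem F hsigma nS jS sjn jn.
rewrite sum_rem in sum_eq.
have exchange : F j (sigma n) + F n n < F j n + F n (sigma n).
  by apply: F_exchange; apply: ltS'n; rewrite memS' ?jn ?sigma_n ?sigmaS.
apply/leqifP => /=; move: IH.1 sum_eq exchange.
set a := \sum_(k <- rem n S) F k k.
set b := \sum_(k <- rem n S) F k ([eta sigma with j |-> sigma n] k).
set c := \sum_(k <- rem n S) F k (sigma k); lia.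
Qed.
End Monge.

Section Increments.
Variables (p : nat) (yd : nat -> nat).
Hypothesis p_prime : prime p.
Hypothesis yd_digit : forall n, yd n < p.
Hypothesis yd_not_finite : ~ exists N, forall n, N <= n -> yd n = 0.

Lemma psumS w : psum yd w.+1 = psum yd w + yd w.
Proof. by rewrite /psum big_nat_recr. Qed.

Lemma leq_psum : {homo psum yd : w w' / w <= w'}.
Proof.
by move=> w w' le_ww'; rewrite /psum (big_cat_nat _ le_ww') ?leq_addr.
Qed.

Lemma psum_unbounded B : exists w, B <= psum yd w.
Proof.
elim: B => [|B [w leBw]]; first by exists 0.
have [n [le_wn yd_n]] : exists n, w <= n /\ yd n <> 0.
  apply: NNPP => none; apply: yd_not_finite; exists w => n le_wn.
  by apply: NNPP => yd_n; apply: none; exists n.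
exists n.+1; rewrite psumS; have := leq_psum le_wn; lia.
Qed.

Lemma dexpP n : 0 < n -> psum yd (dexp yd n) < n <= psum yd (dexp yd n).+1.
Proof.
move=> n_gt0; apply: (epsilon_spec _ (fun w => psum yd w < n <= psum yd w.+1)).
have [w le_nw wmin] := ex_minnP (psum_unbounded n).
case: w le_nw wmin => [|w] le_nw wmin.
  by rewrite /psum big_geq // leqNgt n_gt0 in le_nw.
by exists w; rewrite le_nw andbT ltnNge; apply/negP => /wmin; rewrite ltnn.
Qed.

Lemma leq_dexp a b : 0 < a -> a <= b -> dexp yd a <= dexp yd b.
Proof.
move=> a_gt0 le_ab; have /andP[a_gt _] := dexpP a_gt0.
have /andP[_ b_le] := dexpP (leq_trans a_gt0 le_ab).
by rewrite leqNgt; apply/negP => /leq_psum; lia.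
Qed.

(* Every digit is smaller than p, so no block (psum w, psum w.+1] contains
   both a and a + p. *)
Lemma ltn_dexp a b : 0 < a -> a + p <= b -> dexp yd a < dexp yd b.
Proof.
move=> a_gt0 le_apb; have /andP[a_gt _] := dexpP a_gt0.
have /andP[_ b_le] := dexpP (leq_trans a_gt0 (leq_trans (leq_addr p a) le_apb)).
rewrite ltnNge; apply/negP => le_ba.
have := @leq_psum (dexp yd b).+1 (dexp yd a).+1 le_ba.
rewrite !psumS in b_le *; have := yd_digit (dexp yd a); lia.
Qed.

Lemma leq_dfun : {homo dfun p yd : a b / a <= b}.
Proof.
move=> [|a] b le_ab //; rewrite /dfun (leq_trans _ le_ab) //.
by rewrite leq_pexp2l ?prime_gt0 ?leq_dexp.
Qed.

Lemma ltn_dfun a b : 0 < b -> a + p <= b -> dfun p yd a < dfun p yd b.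
Proof.
rewrite /dfun => -> le_apb; case: a le_apb => [|a] le_apb /=.
  by rewrite expn_gt0 prime_gt0.
by rewrite ltn_exp2l ?prime_gt1 ?ltn_dexp.
Qed.

Definition dfunz (z : int) : nat := if z is Posz n then dfun p yd n else 0.

Lemma leq_dfunz : {homo dfunz : z z' / (z <= z')%R >-> z <= z'}.
Proof. by case=> [a|a] [b|b] //= le_ab; apply: leq_dfun. Qed.

Lemma ltn_dfunz (z z' : int) :
  (0 < z')%R -> (z + p%:Z <= z')%R -> dfunz z < dfunz z'.
Proof.
case: z' => [b|//] b_gt0; case: z => [a|a] le_apb.
  by apply: ltn_dfun; lia.
have {}b_gt0 : 0 < b by lia.
by rewrite /= /dfun b_gt0 expn_gt0 prime_gt0.
Qed.

Lemma ycumS (z : int) : ycum p yd (z + 1)%R = ycum p yd z + dfunz (z + 1)%R.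
Proof.
case: z => [n|[|n]].
- by rewrite -PoszD addn1 /= big_nat_recr.
- by rewrite /= big_geq.
- by have -> : (Negz n.+1 + 1 = Negz n)%R by rewrite !NegzE; lia.
Qed.

Lemma ycumD (z : int) (t : nat) :
  ycum p yd (z + t%:Z)%R = ycum p yd z + \sum_(s < t) dfunz (z + s%:Z + 1)%R.
Proof.
elim: t => [|t IHt]; first by rewrite addr0 big_ord0 addn0.
have -> : (z + t.+1%:Z = z + t%:Z + 1)%R by lia.
by rewrite ycumS IHt big_ord_recr addnA.
Qed.

Lemma ycum_increment_lt (a b : int) (L : nat) :
  0 < L -> (a + p%:Z <= b)%R -> (0 <= b)%R ->
  ycum p yd (a + L%:Z)%R + ycum p yd b < ycum p yd a + ycum p yd (b + L%:Z)%R.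
Proof.
case: L => [//|L] _ le_apb b_ge0.
rewrite !ycumD !big_ord_recr /= addnAC [X in _ < X]addnA ltn_add2l -addnS.
apply: leq_add; first by apply: leq_sum => s _; apply: leq_dfunz; lia.
by apply: ltn_dfunz; lia.
Qed.

Lemma Rk_exchange j i m : j < m -> i < m ->
  Rk p yd j i + Rk p yd m m < Rk p yd j m + Rk p yd m i.
Proof.
move=> lt_jm lt_im.
have le_pj_pm : p * j.+1 <= p * m by rewrite leq_mul2l lt_jm orbT.
have le_m_pm : m <= p * m by rewrite leq_pmull ?prime_gt0.
have RkE k : Rk p yd k i = ycum p yd ((p * k)%:Z - m%:Z + (m - i)%:Z)%R.
  by rewrite /Rk; congr ycum; lia.
rewrite !RkE; apply: ycum_increment_lt; lia.
Qed.
End Increments.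

Theorem proposition5p7 (p : nat) (yd : nat -> nat)
  (hp : prime p)
  (hdig : forall n, (yd n < p)%N)
  (hy : ~ (exists N, forall n, (N <= n)%N -> yd n = 0%N))
  (S : seq nat) (sigma : nat -> nat)
  (hS : enriched_perm S sigma) :
  (Rperm p yd S id <= Rperm p yd S sigma)%N /\
  (Rperm p yd S id = Rperm p yd S sigma <-> {in S, forall k, sigma k = k}).
Proof.
case: hS => uS _ sigmaS sigma_inj.
have [le_Rperm eq_Rperm] :=
  leqif_sum_seq_perm (Rk_exchange hp hdig hy) (And3 uS sigmaS sigma_inj).
split=> //; split=> [/eqP | fixS].
  by rewrite eq_Rperm => /allP fixS k /fixS /eqP.
by apply/eqP; rewrite eq_Rperm; apply/allP => k /fixS ->.
Qed.
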